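(* Let $G=\mathbb Z\wr\mathbb Z=\langle a\rangle\wr\langle b\rangle$. Then $\mathrm{pw}(G,\{a,b\})=3$.
   Context: $a$ generates the first (base) infinite cyclic factor and $b$ the second (acting) infinite cyclic factor of the restricted wreath product. A palindrome in a group generated by $X$ is an element represented by a reduced word in $X^{\pm1}$ reading the same forwards and backwards; $l_{\mathcal P}(g)$ is the minimal number of palindromes whose product is $g$; $\mathrm{pw}(G,X)=\sup_{g\in G}l_{\mathcal P}(g)$. *)

From mathcomp Require Import all_boot all_order all_algebra.
Set Implicit Arguments. Unset Strict Implicit. Unset Printing Implicit Defensive.
Import Order.TTheory GRing.Theory Num.Theory.
Local Open Scope ring_scope.

(* Z wr Z = <a> wr <b>, realised inside the (unrestricted) semidirect product
   (int -> int) x| int, with (f,m)(g,n) = (x |-> f x + g (x - m), m + n).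
   The restricted wreath product is the subgroup generated by
   a = (delta_0, 0) and b = (0, 1), i.e. the set of values of words. *)
Definition W := ((int -> int) * int)%type.

Definition wmul (x y : W) : W :=
  (fun t => x.1 t + y.1 (t - x.2), x.2 + y.2).
Definition wone : W := (fun _ => 0, 0).
Definition wa : W := (fun t => if t == 0 then 1 else 0, 0).
Definition wb : W := (fun _ => 0, 1).
Definition wainv : W := (fun t => if t == 0 then -1 else 0, 0).
Definition wbinv : W := (fun _ => 0, -1).

(* Letters of X^{+-1}, X = {a, b}: (is_b, is_inverse). *)
Definition letter := (bool * bool)%type.
Definition linv (l : letter) : letter := (l.1, ~~ l.2).
Definition leval (l : letter) : W :=
  match l with
  | (false, false) => wa | (false, true) => wainv
  | (true, false) => wb  | (true, true) => wbinv
  end.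
Definition weval (w : seq letter) : W := foldr (fun l x => wmul (leval l) x) wone w.

Definition inG (x : W) : Prop := exists w : seq letter, weval w = x.

Definition reduced (w : seq letter) : bool := sorted (fun l l' => l' != linv l) w.
Definition palword (w : seq letter) : bool := rev w == w.

Definition palindrome (x : W) : Prop :=
  exists w : seq letter, [/\ reduced w, palword w & weval w = x].

Definition pal_length_le (x : W) (k : nat) : Prop :=
  exists ps : seq W, [/\ (size ps <= k)%N, foldr (fun p P => palindrome p /\ P) True ps
                       & x = foldr wmul wone ps].

Definition pw_is (n : nat) : Prop :=
  (forall x, inG x -> pal_length_le x n) /\
  (forall m : nat, (forall x, inG x -> pal_length_le x m) -> (n <= m)%N).

From mathcomp Require Import all_boot all_order all_algebra.
From mathcomp Require Import zify ring.
From Stdlib Require Import FunctionalExtensionality.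
Set Implicit Arguments. Unset Strict Implicit. Unset Printing Implicit Defensive.
Import Order.TTheory GRing.Theory Num.Theory.
Local Open Scope ring_scope.

(* A lamp configuration symmetric about m/2 gives a palindrome (f, m): conjugating
   by a power of b recentres f so that it lives on [0, m], and conjugating by a^e
   with e = f 0 clears the lamps at 0 and m, which shrinks m by 2 after one more
   b-conjugation.  A finitely supported f is the sum of a function symmetric about 0
   and one symmetric about 1/2, hence (f, m) = (g1, 0) (g2, 1) b^(m-1) is a product
   of three palindromes.  Conversely, reversing a word reverses the element, so the
   lamp function of a palindrome (p, m) is symmetric about m/2; if a product of two
   palindromes has zero b-exponent, its lamp function is therefore symmetric, which
   fails for a b a^2 b^-1. *)

Lemma wext (x y : W) : (forall t, x.1 t = y.1 t) -> x.2 = y.2 -> x = y.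
Proof.
case: x => f m; case: y => g n /= eq_fg ->; congr pair.
exact: functional_extensionality.
Qed.

Lemma wmulA x y z : wmul x (wmul y z) = wmul (wmul x y) z.
Proof.
apply: wext => [t|] /=; last by rewrite addrA.
by rewrite addrA opprD addrA.
Qed.

Lemma wmulw1 x : wmul x wone = x.
Proof. by apply: wext => [t|] /=; rewrite addr0. Qed.

Lemma wmul1w x : wmul wone x = x.
Proof. by apply: wext => [t|] /=; rewrite ?add0r ?subr0. Qed.

Lemma linvK l : linv (linv l) = l.
Proof. by case: l => [] [] []. Qed.

Lemma linv_neq l : l != linv l.
Proof. by case: l => [] [] []. Qed.

Lemma wmul_linv l : wmul (leval l) (leval (linv l)) = wone.
Proof.
by case: l => [] [] []; apply: wext => [t|] //=; rewrite ?subr0; case: (t == 0).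
Qed.

Lemma wmul_linvK l z : wmul (leval l) (wmul (leval (linv l)) z) = z.
Proof. by rewrite wmulA wmul_linv wmul1w. Qed.

Lemma weval_rcons r l : weval (rcons r l) = wmul (weval r) (leval l).
Proof. by elim: r => [|x r IH] /=; rewrite ?wmulw1 ?wmul1w // IH wmulA. Qed.

Lemma weval_nseqSr n l : weval (nseq n.+1 l) = wmul (weval (nseq n l)) (leval l).
Proof. by rewrite -weval_rcons -[nseq n.+1 l]rev_nseq /= rev_cons rev_nseq. Qed.

Lemma palword_cases r : palword r ->
  [\/ r = [::], exists l, r = [:: l] | exists l r', r = l :: rcons r' l /\ palword r'].
Proof.
case: r => [|l r]; first by constructor 1.
case/lastP: r => [|r l']; first by constructor 2; exists l.
rewrite /palword rev_cons rev_rcons => /eqP [<- /rcons_inj [pal_r]].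
by constructor 3; exists l', r; rewrite /palword pal_r.
Qed.

Lemma palindrome_conj_letter l y :
  palindrome y -> palindrome (wmul (leval l) (wmul y (leval l))).
Proof.
case=> r [red_r pal_r <-].
have l_neq_linv x : x != linv l -> l != linv x.
  by apply: contra => /eqP ->; rewrite linvK.
have extend x r' : r = x :: r' -> x != linv l -> last x r' = x ->
    palindrome (wmul (leval l) (wmul (weval r) (leval l))).
  move=> def_r x_neq last_r; exists (l :: rcons r l); split.
  - move: red_r; rewrite /reduced def_r /= rcons_path => ->.
    by rewrite x_neq last_r l_neq_linv.
  - by rewrite /palword rev_cons rev_rcons (eqP pal_r).
  - by rewrite /= weval_rcons.
case: (palword_cases pal_r) => [->|[x def_r]|[x [r' [def_r pal_r']]]].
- exists [:: l; l]; split; last by rewrite /= wmulw1 wmul1w.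
    by rewrite /reduced /= andbT linv_neq.
  by rewrite /palword.
- have [x_eq|x_neq] := eqVneq x (linv l); last exact: (extend x [::]).
  exists [:: l]; split => //; first by rewrite /palword.
  by rewrite def_r x_eq /= !wmulw1 wmul_linvK.
- have [x_eq|x_neq] := eqVneq x (linv l); last first.
    by apply: (extend x (rcons r' x)); rewrite ?last_rcons.
  exists r'; split => //.
    by move: red_r; rewrite /reduced def_r /= rcons_path => /andP [/path_sorted].
  rewrite def_r /= weval_rcons x_eq -!wmulA wmul_linvK.
  by rewrite -{2}(linvK l) wmul_linv wmulw1.
Qed.

Lemma palindrome_nseq l n : palindrome (weval (nseq n l)).
Proof.
exists (nseq n l); split => //; last by rewrite /palword rev_nseq.
rewrite /reduced; case: n => //= n; elim: n => //= n ->.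
by rewrite andbT linv_neq.
Qed.

Lemma palindrome_conj_nseq l n y : palindrome y ->
  palindrome (wmul (weval (nseq n l)) (wmul y (weval (nseq n l)))).
Proof.
elim: n => [|n IH] pal_y; first by rewrite wmul1w wmulw1.
set P := weval (nseq n l).
have -> : wmul (weval (nseq n.+1 l)) (wmul y (weval (nseq n.+1 l))) =
          wmul (leval l) (wmul (wmul P (wmul y P)) (leval l)).
  by rewrite [in X in wmul y X]weval_nseqSr /= !wmulA.
exact: palindrome_conj_letter (IH pal_y).
Qed.

Definition apow (e : int) : W := (fun t => if t == 0 then e else 0, 0).
Definition bpow (m : int) : W := (fun _ => 0, m).

Lemma apowD e e' : wmul (apow e) (apow e') = apow (e + e').
Proof.
by apply: wext => [t|] /=; rewrite ?subr0 ?addr0 //; case: (t == 0); rewrite ?addr0.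
Qed.

Lemma bpowD k k' : wmul (bpow k) (bpow k') = bpow (k + k').
Proof. by apply: wext. Qed.

Lemma weval_nseq_a n s : weval (nseq n (false, s)) = apow (if s then - n%:Z else n%:Z).
Proof.
elim: n => [|n IH]; first by apply: wext => [t|] //=; case: s; case: (t == 0).
rewrite [LHS]/= -/(weval _) {}IH.
have -> : (if s then wainv else wa) = apow (if s then -1 else 1).
  by case: s; apply: wext => [t|].
by rewrite apowD; case: s; congr apow; lia.
Qed.

Lemma weval_nseq_b n s : weval (nseq n (true, s)) = bpow (if s then - n%:Z else n%:Z).
Proof.
elim: n => [|n IH]; first by case: s.
rewrite [LHS]/= -/(weval _) {}IH.
have -> : (if s then wbinv else wb) = bpow (if s then -1 else 1) by case: s.
by rewrite bpowD; case: s; congr bpow; lia.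
Qed.

Lemma apow_nseq e : exists n s, apow e = weval (nseq n (false, s)).
Proof.
by case: e => n; [exists n, false | exists n.+1, true]; rewrite weval_nseq_a ?NegzE.
Qed.

Lemma bpow_nseq m : exists n s, bpow m = weval (nseq n (true, s)).
Proof.
by case: m => n; [exists n, false | exists n.+1, true]; rewrite weval_nseq_b ?NegzE.
Qed.

Lemma palindrome_apow e : palindrome (apow e).
Proof. by have [n [s ->]] := apow_nseq e; apply: palindrome_nseq. Qed.

Lemma palindrome_bpow m : palindrome (bpow m).
Proof. by have [n [s ->]] := bpow_nseq m; apply: palindrome_nseq. Qed.

Lemma conj_apowE e y : wmul (apow e) (wmul y (apow e)) =
  (fun t => (if t == 0 then e else 0) + y.1 t + (if t == y.2 then e else 0), y.2).
Proof. by apply: wext => [t|] /=; rewrite ?subr0 ?addr0 ?add0r ?subr_eq0 ?addrA. Qed.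

Lemma conj_bpowE k y : wmul (bpow k) (wmul y (bpow k)) = (fun t => y.1 (t - k), y.2 + 2 * k).
Proof. by apply: wext => [t|] /=; [rewrite add0r addr0 | ring]. Qed.

Lemma palindrome_conj_apow e y : palindrome y -> palindrome (wmul (apow e) (wmul y (apow e))).
Proof. by have [n [s ->]] := apow_nseq e; apply: palindrome_conj_nseq. Qed.

Lemma palindrome_conj_bpow k y : palindrome y -> palindrome (wmul (bpow k) (wmul y (bpow k))).
Proof. by have [n [s ->]] := bpow_nseq k; apply: palindrome_conj_nseq. Qed.

Definition symmetric_about (c : int) (f : int -> int) := forall t, f (c - t) = f t.

Lemma symmetric_vanish_eq0 (m : int) (f : int -> int) :
  symmetric_about m f -> (forall t, t < 0 -> f t = 0) -> forall t, (t < 0) || (m < t) -> f t = 0.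
Proof.
move=> sym_f f0 t /orP [t_lt0|m_lt_t]; first exact: f0.
by rewrite -sym_f f0 //; lia.
Qed.

Lemma palindrome_symmetric_step (m : int) (f : int -> int) : 0 < m ->
  (forall g : int -> int, symmetric_about (m - 2) g -> (forall t, t < 0 -> g t = 0) ->
    palindrome (g, m - 2)) ->
  symmetric_about m f -> (forall t, t < 0 -> f t = 0) -> palindrome (f, m).
Proof.
move=> m_gt0 IH sym_f f0.
pose e := f 0.
pose g t := f t - (if t == 0 then e else 0) - (if t == m then e else 0).
have g_0 : g 0 = 0 by rewrite /g eqxx eq_sym gt_eqF // subrr subr0.
have -> : (f, m) = wmul (apow e) (wmul (g, m) (apow e)).
  by rewrite conj_apowE; apply: wext => [t|] //=; rewrite /g; ring.
apply: palindrome_conj_apow.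
have -> : (g, m) = wmul (bpow 1) (wmul (fun t => g (t + 1), m - 2) (bpow 1)).
  by rewrite conj_bpowE; apply: wext => [t|] /=; [rewrite subrK | ring].
apply/palindrome_conj_bpow/IH => t.
- rewrite /g (_ : m - 2 - t + 1 = m - (t + 1)); last by ring.
  rewrite sym_f.
  have -> : (m - (t + 1) == 0) = (t + 1 == m) by apply/eqP/eqP; lia.
  have -> : (m - (t + 1) == m) = (t + 1 == 0) by apply/eqP/eqP; lia.
  ring.
- move=> t_lt0; have [t_eq|t_neq] := eqVneq t (-1); first by rewrite t_eq.
  rewrite /g f0; last by lia.
  by rewrite !ifF ?subrr //; apply/eqP; lia.
Qed.

Lemma palindrome_symmetric_vanish_neg (m : int) (f : int -> int) :
  symmetric_about m f -> (forall t, t < 0 -> f t = 0) -> palindrome (f, m).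
Proof.
suff palindrome_le : forall (n : nat) (m : int) (f : int -> int), m <= n%:Z ->
    symmetric_about m f -> (forall t, t < 0 -> f t = 0) -> palindrome (f, m).
  by apply: (palindrome_le (absz m)); lia.
elim=> [|n IH] {}m {}f m_le sym_f f0.
- have f_out := symmetric_vanish_eq0 sym_f f0.
  have [m_lt0|m_ge0] := ltP m 0.
    have -> : (f, m) = bpow m by apply: wext => [t|] //=; apply: f_out; lia.
    exact: palindrome_bpow.
  have -> : (f, m) = apow (f 0).
    apply: wext => [t|] /=; last by lia.
    by have [->|t_neq0] := eqVneq t 0; last by apply: f_out; lia.
  exact: palindrome_apow.
- have [m_le_n|m_gt_n] := leP m n%:Z; first exact: IH.
  apply: palindrome_symmetric_step => // [|g sym_g g0]; first by lia.
  by apply: IH => //; lia.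
Qed.

Lemma palindrome_symmetric (m lo : int) (f : int -> int) :
  symmetric_about m f -> (forall t, t < lo -> f t = 0) -> palindrome (f, m).
Proof.
move=> sym_f f0.
have -> : (f, m) = wmul (bpow lo) (wmul (fun t => f (t + lo), m - 2 * lo) (bpow lo)).
  by rewrite conj_bpowE; apply: wext => [t|] /=; [rewrite subrK | ring].
apply/palindrome_conj_bpow/palindrome_symmetric_vanish_neg => [t|t t_lt0].
  by rewrite -sym_f; congr f; ring.
by apply: f0; lia.
Qed.

Lemma weval_bounded_support w : exists N : nat, forall t, (N < absz t)%N -> (weval w).1 t = 0.
Proof.
elim: w => [|l w [N HN]]; first by exists 0%N.
exists N.+1 => t t_gt; have t_neq0 : (t == 0) = false by apply/eqP; lia.
case: l => [[] []] /=; rewrite ?t_neq0 ?add0r HN //; lia.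
Qed.

(* The tail sums of [F s - F (-s)] give the part symmetric about 1/2. *)
Lemma symmetric_split (F : int -> int) (N : nat) : (forall t, (N < absz t)%N -> F t = 0) ->
  exists g1 g2 : int -> int, [/\ forall t, F t = g1 t + g2 t,
    symmetric_about 0 g1, symmetric_about 1 g2,
    forall t, t < - N%:Z -> g1 t = 0 & forall t, t < - N%:Z -> g2 t = 0].
Proof.
move=> F_out; pose G (n : nat) := \sum_(n <= s < N.+1) (F s%:Z - F (- s%:Z)).
have G_out n : (N < n)%N -> G n = 0 by move=> n_gt; rewrite /G big_geq.
have GS n : G n = F n%:Z - F (- n%:Z) + G n.+1.
  have [n_le|n_gt] := leqP n N; first by rewrite /G big_ltn.
  by rewrite !F_out ?G_out ?subrr ?add0r //; lia.
pose g2 t := if 0 < t then G (absz t) else G (absz (1 - t)).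
have g2_out t : (N < absz t)%N -> g2 t = 0.
  by rewrite /g2 => t_gt; case: (ltP 0 t) => t_pos; apply: G_out; lia.
exists (fun t => F t - g2 t), g2; split => [t|t|t|t t_lt|t t_lt].
- by rewrite subrK.
- wlog t_gt0 : t / 0 < t.
    move=> sym_pos; have [t_gt0|t_le0] := ltP 0 t; first exact: sym_pos.
    have [->|t_neq0] := eqVneq t 0; first by rewrite subr0.
    by rewrite -[in RHS](subKr 0 t) (sym_pos (0 - t)) //; lia.
  rewrite sub0r /g2 t_gt0 ifF; last by lia.
  rewrite (_ : absz (1 - - t) = (absz t).+1); last by lia.
  rewrite (GS (absz t)) (_ : (absz t)%:Z = t); last by lia.
  ring.
- rewrite /g2 (_ : 1 - (1 - t) = t); last by ring.
  by do 2 case: ltP => ? //; lia.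
- by rewrite F_out ?g2_out ?subr0 //; lia.
- by rewrite g2_out //; lia.
Qed.

Lemma pal_length_le_bounded_support (F : int -> int) (M : int) (N : nat) :
  (forall t, (N < absz t)%N -> F t = 0) -> pal_length_le (F, M) 3.
Proof.
move=> /symmetric_split [g1 [g2 [F_eq sym1 sym2 g1_out g2_out]]].
exists [:: (g1, 0); (g2, 1); bpow (M - 1)]; split => //=.
  split; first exact: palindrome_symmetric sym1 g1_out.
  split; first exact: palindrome_symmetric sym2 g2_out.
  by split; first exact: palindrome_bpow.
by apply: wext => [t|] /=; rewrite ?F_eq ?subr0 ?addr0 //; ring.
Qed.

Lemma inG_pal_length_le3 x : inG x -> pal_length_le x 3.
Proof.
case=> w <-; have [N w_out] := weval_bounded_support w.
by case: (weval w) w_out => F M; apply: pal_length_le_bounded_support.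
Qed.

Definition wrev (x : W) : W := (fun t => x.1 (x.2 - t), x.2).

Lemma wrev_mul x y : wrev (wmul x y) = wmul (wrev y) (wrev x).
Proof.
apply: wext => [t|] /=; last by rewrite addrC.
by rewrite addrC; congr (_ + _); [congr (y.1 _) | congr (x.1 _)]; ring.
Qed.

Lemma weval_rev w : weval (rev w) = wrev (weval w).
Proof.
elim: w => [|l w IH]; first by apply: wext.
rewrite rev_cons weval_rcons IH /= wrev_mul; congr wmul.
by case: l => [[] []]; apply: wext => [t|] //=; rewrite sub0r oppr_eq0.
Qed.

Lemma palindrome_symmetric_about p : palindrome p -> symmetric_about p.2 p.1.
Proof.
case=> w [_ /eqP pal_w <-] t.
by rewrite -[in RHS]pal_w weval_rev.
Qed.

Lemma pal_length_le2_mul x : pal_length_le x 2 ->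
  exists p q, [/\ palindrome p, palindrome q & x = wmul p q].
Proof.
have pal1 : palindrome wone by exists [::].
case=> ps [+ + ->]; case: ps => [|p [|q [|r ps]]] //= _ pal_ps.
- by exists wone, wone; rewrite wmulw1.
- by case: pal_ps => pal_p _; exists p, wone; rewrite wmulw1.
- by case: pal_ps => pal_p [pal_q _]; exists p, q; rewrite wmulw1.
Qed.

Lemma wmul_palindromes_symmetric p q : palindrome p -> palindrome q ->
  (wmul p q).2 = 0 -> symmetric_about p.2 (wmul p q).1.
Proof.
move=> /palindrome_symmetric_about sym_p /palindrome_symmetric_about sym_q /= pq2 t.
rewrite sym_p -sym_q; congr (_ + q.1 _); lia.
Qed.

(* [a b a^2 b^-1]: its function [delta_0 + 2 delta_1] is symmetric about no point. *)
Definition wx : W :=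
  weval [:: (false, false); (true, false); (false, false); (false, false); (true, true)].

Lemma wxE : wx = (fun t => (if t == 0 then 1 else 0) + (if t == 1 then 2 else 0), 0).
Proof.
apply: wext => [t|] //=; rewrite !subr0 !add0r subr_eq0.
by case: (t == 1).
Qed.

Lemma not_pal_length_le_wx : ~ pal_length_le wx 2.
Proof.
case/pal_length_le2_mul => p [q [pal_p pal_q wx_pq]].
have := wmul_palindromes_symmetric pal_p pal_q; rewrite -wx_pq wxE => /(_ erefl) sym.
have [p2_0|p2_neq0] := eqVneq p.2 0.
  by have := sym 1; rewrite p2_0.
by have := sym 0; rewrite /= subr0 (negbTE p2_neq0); case: (p.2 == 1).
Qed.

Lemma pal_width_ge3 m : (forall x, inG x -> pal_length_le x m) -> (3 <= m)%N.
Proof.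
move=> pal_m; rewrite leqNgt; apply/negP => m_lt3.
have [ps [size_ps pal_ps wx_ps]] := pal_m wx (ex_intro _ _ erefl).
by apply: not_pal_length_le_wx; exists ps; split => //; apply: leq_trans size_ps _.
Qed.

Theorem theorem5p7 : pw_is 3.
Proof. by split; [exact: inG_pal_length_le3 | exact: pal_width_ge3]. Qed.
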